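(* Let $X$ be a countably cellular Tychonoff space and $\mathcal M$ the $\sigma$-ideal of meager subsets of $X$. Then (1) every meager subset of $X$ is contained in a meager functionally Borel subset of $X$; (2) every family of pairwise disjoint nonmeager Borel subsets of $X$ is countable; (3) $\mathcal{B}o^\pm\mathcal M=\mathcal{B}a^\pm\mathcal M$, and this $\sigma$-algebra equals the $\sigma$-algebra of subsets of $X$ having the Baire Property.
   Context: A space is countably cellular if every family of pairwise disjoint open sets is countable. A subset $A\subseteq X$ is functionally Borel if $A=f^{-1}[B]$ for a continuous $f:X\to\mathbb R^\omega$ and Borel $B\subseteq\mathbb R^\omega$. $\mathcal{B}o$ and $\mathcal{B}a$ denote the $\sigma$-algebras of Borel and functionally Borel subsets of $X$, and $\mathcal A^\pm\mathcal M$ is the smallest $\sigma$-algebra containing $\mathcal A\cup\mathcal M$. A set has the Baire Property if it belongs to the smallest $\sigma$-algebra containing all open and all meager sets. *)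

From HB Require Import structures.
From mathcomp Require Import all_boot all_order all_algebra.
From mathcomp Require Import all_classical all_reals all_analysis.
Set Implicit Arguments. Unset Strict Implicit. Unset Printing Implicit Defensive.
Import Order.TTheory GRing.Theory Num.Theory.
Import numFieldTopology.Exports numFieldNormedType.Exports.
Local Open Scope classical_set_scope.
Local Open Scope ring_scope.

Definition tychonoff_space (R : realType) (X : topologicalType) : Prop :=
  hausdorff_space X /\
  forall (x : X) (B : set X), closed B -> ~ B x ->
    exists f : X -> R, continuous f /\ f x = 0 /\ (forall y, B y -> f y = 1).

Definition countably_cellular (X : topologicalType) : Prop :=
  forall F : set (set X), (forall U, F U -> open U) ->
    (forall U V, F U -> F V -> U <> V -> U `&` V = set0) -> countable F.

Definition nowhere_dense_set (X : topologicalType) (A : set X) : Prop :=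
  interior (closure A) = set0.

Definition meager (X : topologicalType) (A : set X) : Prop :=
  exists F : nat -> set X, (forall n, nowhere_dense_set (F n)) /\
    A `<=` \bigcup_n F n.

Definition Borel (X : topologicalType) : set (set X) :=
  <<s [set U : set X | open U] >>.

Definition Romega (R : realType) := {ptws nat -> R}.

Definition funBorel (R : realType) (X : topologicalType) : set (set X) :=
  [set A | exists (f : X -> Romega R) (B : set (Romega R)),
     continuous f /\ Borel B /\ A = f @^-1` B].

Definition pmgen (X : Type) (A M : set (set X)) : set (set X) :=
  <<s A `|` M >>.

Definition baire_property_sets (X : topologicalType) : set (set X) :=
  <<s [set U : set X | open U] `|` [set A | meager A] >>.

From HB Require Import structures.
From mathcomp Require Import all_boot all_order all_algebra.
From mathcomp Require Import all_classical all_reals all_analysis.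
Set Implicit Arguments. Unset Strict Implicit. Unset Printing Implicit Defensive.
Import Order.TTheory GRing.Theory Num.Theory.
Import numFieldTopology.Exports numFieldNormedType.Exports.
Local Open Scope classical_set_scope.
Local Open Scope ring_scope.

(* Countable cellularity makes every maximal disjoint family of nonempty open
   sets countable.  Applied to cozero sets inside an open set [U], this shows
   that [U] is, up to a nowhere dense set, a countable union of cozero sets,
   i.e. a functionally Borel set; hence every Borel set is functionally Borel
   modulo meager sets, and every nowhere dense set lies in the complement of
   such a union, which gives (1) and (3).  Applied to open meager sets, it
   yields a closed meager set [M] containing every open meager set.  A Borel set
   [A] equals an open set [U_A] modulo a meager set, so for a disjoint family of
   nonmeager Borel sets the sets [U_A \ M] are nonempty, open and pairwise
   disjoint, and (2) follows. *)

Definition pairwise_disjoint (T : Type) (F : set (set T)) : Prop :=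
  forall U V, F U -> F V -> U <> V -> U `&` V = set0.

Lemma countable_bigcup_seq (T : Type) (F : set (set T)) : countable F ->
  exists e : nat -> set T,
    (forall n, F (e n) \/ e n = set0) /\ \bigcup_(A in F) A = \bigcup_n e n.
Proof.
move=> /countable_injP[idx idx_inj].
have enum n : exists B : set T,
    (F B /\ idx B = n) \/ (B = set0 /\ ~ exists2 A, F A & idx A = n).
  have [[A FA <-]|no_A] := pselect (exists2 A, F A & idx A = n).
    by exists A; left.
  by exists set0; right.
have [e he] := choice enum.
exists e; split=> [n|]; first by case: (he n) => [[]|[]]; [left|right].
apply/seteqP; split=> x [A]; last by case: (he A) => [[FeA _]|[-> //]]; exists (e A).
move=> FA Ax; exists (idx A) => //.
case: (he (idx A)) => [[FeA /idx_inj eA]|[_ []]]; last by exists A.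
by rewrite eA // inE.
Qed.

Lemma maximal_pairwise_disjoint (T : Type) (Q : set T -> Prop) :
  exists F : set (set T),
    [/\ forall V, F V -> Q V /\ V !=set0, pairwise_disjoint F &
        forall G, Q G -> G !=set0 -> exists2 V, F V & G `&` V !=set0].
Proof.
pose P := [set F : set (set T) |
  (forall V, F V -> Q V /\ V !=set0) /\ pairwise_disjoint F].
have [F [[FQ Fdisj] Fmax]] : exists F, P F /\ forall B, F `<` B -> ~ P B.
  apply: Zorn_bigcup => C CP Ctot; split=> [V [A /CP[+ _] AV]|]; first exact.
  move=> U V [A CA AU] [B CB BV] UV.
  have [AB|BA] := Ctot _ _ CA CB.
  - exact: (CP _ CB).2 _ _ (AB _ AU) BV UV.
  - exact: (CP _ CA).2 _ _ AU (BA _ BV) UV.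
exists F; split=> // G QG G0; apply: contrapT => G_apart.
have disjG U : F U -> U `&` G = set0.
  move=> FU; apply/seteqP; split=> // x [Ux Gx].
  by apply: G_apart; exists U => //; exists x.
apply: (Fmax (F `|` [set G])); last split.
- split=> [x Fx|FG]; first by left.
  have FG' : F G by apply: FG; right.
  by apply: G_apart; exists G => //; rewrite setIid.
- by move=> V [/FQ //|->].
- move=> U V [FU|->] [FV|->] UV; [exact: Fdisj | exact: disjG | |by []].
  by rewrite setIC; exact: disjG.
Qed.

Lemma sigma_algebra_setU (T : Type) (G : set (set T)) (A B : set T) :
  <<s G >> A -> <<s G >> B -> <<s G >> (A `|` B).
Proof.
move=> GA GB; rewrite -bigcup2E; apply: sigma_algebra_bigcup => -[|[|n]] //=.
exact: sigma_algebra0.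
Qed.

Lemma pmgen_sub (T : Type) (A B M : set (set T)) :
  A `<=` pmgen B M -> pmgen A M `<=` pmgen B M.
Proof.
move=> AB; apply: smallest_sub; first exact: smallest_sigma_algebra.
by move=> S [/AB //|MS]; apply: sub_sigma_algebra; right.
Qed.

Lemma pmgenS (T : Type) (A B M : set (set T)) :
  A `<=` B -> pmgen A M `<=` pmgen B M.
Proof. by move=> AB; apply: pmgen_sub => S /AB BS; apply: sub_sigma_algebra; left. Qed.

Section meager.
Context {X : topologicalType}.
Implicit Types A B U W : set X.

Lemma nowhere_dense_set_avoid A :
  (forall O, open O -> O !=set0 ->
     exists P, [/\ open P, P !=set0, P `<=` O & P `&` A = set0]) ->
  nowhere_dense_set A.
Proof.
move=> sep; apply/seteqP; split=> // x int_x.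
have [P [oP [z Pz] PO PA]] := sep _ (@open_interior _ (closure A)) (ex_intro _ x int_x).
have [w [Aw Pw]] := interior_subset (PO _ Pz) P (open_nbhs_nbhs (conj oP Pz)).
by have : (P `&` A) w by []; rewrite PA.
Qed.

Lemma nowhere_dense_set0 : nowhere_dense_set (@set0 X).
Proof. by rewrite /nowhere_dense_set closure0 interior0. Qed.

Lemma nowhere_dense_closure A : nowhere_dense_set A -> nowhere_dense_set (closure A).
Proof. by rewrite /nowhere_dense_set -(proj1 (closure_id _) (@closed_closure _ A)). Qed.

Lemma nowhere_dense_openD U W : open W ->
  (forall O, open O -> O `&` U !=set0 -> O `&` W !=set0) ->
  nowhere_dense_set (U `\` W).
Proof.
move=> oW W_meets; apply: nowhere_dense_set_avoid => O oO O0.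
have [[z OWz]|OW0] := pselect ((O `&` W) !=set0).
  exists (O `&` W); split; [exact: openI | by exists z | by move=> ? []|].
  by apply/seteqP; split=> // y [[_ Wy] [_ nWy]].
exists O; split=> //; apply/seteqP; split=> // y [Oy [Uy _]].
by apply: OW0; apply: W_meets => //; exists y.
Qed.

Lemma nowhere_dense_closureD U : open U -> nowhere_dense_set (closure U `\` U).
Proof.
move=> oU; apply: nowhere_dense_openD => // O oO [x [Ox clUx]].
by have [y [Uy Oy]] := clUx O (open_nbhs_nbhs (conj oO Ox)); exists y.
Qed.

Lemma nowhere_dense_meager A : nowhere_dense_set A -> meager A.
Proof. by move=> ndA; exists (fun=> A); split=> // x Ax; exists 0%N. Qed.

Lemma meager0 : meager (@set0 X).
Proof. exact/nowhere_dense_meager/nowhere_dense_set0. Qed.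

Lemma meagerS A B : A `<=` B -> meager B -> meager A.
Proof. by move=> AB [F [ndF BF]]; exists F; split=> //; exact: subset_trans BF. Qed.

Lemma meager_bigcup (A : nat -> set X) :
  (forall n, meager (A n)) -> meager (\bigcup_n A n).
Proof.
move=> /choice[F hF].
exists (fun m => if unpickle m is Some (n, k) then F n k else set0); split.
  by move=> m; case: (unpickle m) => [[n k]|]; [exact: (hF n).1 | exact: nowhere_dense_set0].
move=> x [n _ /(hF n).2[k _ Fx]].
by exists (pickle (n, k)) => //; rewrite pickleK.
Qed.

Lemma meagerU A B : meager A -> meager B -> meager (A `|` B).
Proof.
move=> mA mB; apply: (@meagerS _ (\bigcup_n (if n is 0%N then A else B))).
  by move=> x [Ax|Bx]; [exists 0%N | exists 1%N].
by apply: meager_bigcup => -[|n].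
Qed.

Lemma meager_bigcup_countable (F : set (set X)) : countable F ->
  (forall A, F A -> meager A) -> meager (\bigcup_(A in F) A).
Proof.
move=> /countable_bigcup_seq[e [eF ->]] mF; apply: meager_bigcup => n.
by case: (eF n) => [/mF //|->]; exact: meager0.
Qed.

End meager.

Lemma Borel_preimage (Y Z : topologicalType) (f : Y -> Z) (B : set Z) :
  continuous f -> Borel B -> Borel (f @^-1` B).
Proof.
move=> cf; move: B; apply: (smallest_sub (X := [set B | Borel (f @^-1` B)])).
  split=> [|A /= BA|A /= BA]; first exact: sigma_algebra0.
    by rewrite setTD -preimage_setC -setTD; exact: sigma_algebraCD.
  by rewrite preimage_bigcup; exact: sigma_algebra_bigcup.
by move=> U oU; apply: sub_sigma_algebra; exact: open_comp.
Qed.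

Lemma continuous_Romega (R : realType) (Y : topologicalType) (g : Y -> Romega R) :
  (forall n, continuous (fun y => g y n)) -> continuous g.
Proof. by move=> cg y; apply/pointwise_cvgP => n; exact: cg. Qed.

Lemma continuous_Romega_proj (R : realType) (n : nat) :
  continuous (fun y : Romega R => y n).
Proof. exact: (@proj_continuous nat (fun=> R) n). Qed.

Section functionally_Borel.
Variables (R : realType) (X : topologicalType).

Lemma funBorel_sub_Borel : @funBorel R X `<=` @Borel X.
Proof. by move=> _ [f [B [cf [BB ->]]]]; exact: Borel_preimage. Qed.

Lemma funBorelC (A : set X) : funBorel R A -> funBorel R (~` A).
Proof.
move=> [f [B [cf [BB ->]]]]; exists f, (~` B); split=> //.
by split; [rewrite -setTD; exact: sigma_algebraCD | exact: preimage_setC].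
Qed.

(* Countably many maps into [R^omega] are merged into one by interleaving
   their coordinates along [pickle : nat * nat -> nat]. *)
Lemma funBorel_bigcup (A : nat -> set X) :
  (forall n, funBorel R (A n)) -> funBorel R (\bigcup_n A n).
Proof.
move=> /choice[f /choice[B fB]].
pose g x : Romega R := fun m => if unpickle m is Some (n, k) then f n x k else 0.
pose pr (n : nat) (y : Romega R) : Romega R := fun k => y (pickle (n, k)).
have pr_cont n : continuous (pr n).
  by apply: continuous_Romega => k; exact: continuous_Romega_proj.
have fE n : f n = pr n \o g.
  by apply/funext => x; apply/funext => k; rewrite /= /pr /g pickleK.
exists g, (\bigcup_n pr n @^-1` B n); split.
  apply: continuous_Romega => m; rewrite /g; case: (unpickle m) => [[n k]|] /=.
    move=> x; change (continuous_at x ((fun y : Romega R => y k) \o f n)).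
    by apply: continuous_comp; [exact: (fB n).1 | exact: continuous_Romega_proj].
  exact: cst_continuous.
split.
  by apply: sigma_algebra_bigcup => n; apply: Borel_preimage => //; exact: (fB n).2.1.
by rewrite preimage_bigcup; apply: eq_bigcupr => n _; rewrite (fB n).2.2 fE.
Qed.

End functionally_Borel.

Section cozero.
Variables (R : realType) (X : topologicalType).
Implicit Types (A U O : set X) (x : X).

Definition cozero_set (U : set X) : Prop :=
  exists2 f : X -> R, continuous f & U = [set x | f x != 0].

Lemma cozero_set0 : cozero_set set0.
Proof.
exists (fun=> 0); first exact: cst_continuous.
by apply/seteqP; split=> x //=; rewrite eqxx.
Qed.

Lemma open_cozero_set U : cozero_set U -> open U.
Proof.
move=> [f cf ->].
by apply: (@open_comp _ _ f [set r | r != 0]) => [x _|]; [exact: cf | exact: open_neq].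
Qed.

Lemma funBorel_cozero_set U : cozero_set U -> funBorel R U.
Proof.
move=> [f cf ->]; exists (fun x => (fun=> f x) : Romega R), [set y | y 0%N != 0].
split; first by apply: continuous_Romega => n.
split=> //; apply: sub_sigma_algebra.
apply: (@open_comp _ _ (fun y : Romega R => y 0%N) [set r | r != 0]) => [y _|].
  exact: continuous_Romega_proj.
exact: open_neq.
Qed.

Hypotheses (X_tych : tychonoff_space R X) (X_ccc : countably_cellular X).

(* The witness is the cozero set of [1 - h], where [h] vanishes at [x] and is
   [1] off [O]. *)
Lemma tychonoff_cozero_nbhs O x : open O -> O x ->
  exists2 G, cozero_set G & G `<=` O /\ G x.
Proof.
move=> oO Ox; have [_ creg] := X_tych.
have [h [ch [hx h1]]] := creg x _ (open_closedC oO) (fun nOx => nOx Ox).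
exists [set y | 1 - h y != 0]; last split.
- exists (fun y => 1 - h y) => //.
  by move=> y; apply: continuousB; [exact: cst_continuous | exact: ch].
- by move=> y /= hy; apply: contrapT => nOy; move: hy; rewrite h1 // subrr eqxx.
- by rewrite /= hx subr0 oner_neq0.
Qed.

(* A maximal disjoint family of cozero subsets of [U] is countable, and by
   maximality its union meets every open set that meets [U]. *)
Lemma open_cozero_approx U : open U ->
  exists W : nat -> set X, [/\ forall n, cozero_set (W n),
    \bigcup_n W n `<=` U & nowhere_dense_set (U `\` \bigcup_n W n)].
Proof.
move=> oU.
have [F [FQ Fdisj Fmax]] :=
  maximal_pairwise_disjoint (fun G : set X => cozero_set G /\ G `<=` U).
have Fopen V : F V -> open V by move=> /FQ[[/open_cozero_set]].
have [W [WF FW]] := countable_bigcup_seq (X_ccc Fopen Fdisj).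
exists W; split.
- by move=> n; case: (WF n) => [/FQ[[]] //|->]; exact: cozero_set0.
- by rewrite -FW => x [V /FQ[[_ VU] _] /VU].
rewrite -FW; apply: nowhere_dense_openD => [|O oO [y [Oy Uy]]].
  by apply: bigcup_open => V /Fopen.
have [G cG [GOU Gy]] := tychonoff_cozero_nbhs (openI oO oU) (conj Oy Uy).
have [V FV [z [Gz Vz]]] := Fmax G (conj cG (fun z Gz => (GOU z Gz).2)) (ex_intro _ y Gy).
by exists z; split; [case: (GOU z Gz) | exists V].
Qed.

Lemma open_funBorel_approx U : open U ->
  exists2 W, funBorel R W & W `<=` U /\ nowhere_dense_set (U `\` W).
Proof.
move=> /open_cozero_approx[W [cW WU ndUW]]; exists (\bigcup_n W n) => //.
by apply: funBorel_bigcup => n; exact: funBorel_cozero_set.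
Qed.

Lemma nowhere_dense_funBorel_hull A : nowhere_dense_set A ->
  exists B, A `<=` B /\ meager B /\ funBorel R B.
Proof.
move=> ndA.
have [W BaW [WU ndUW]] := open_funBorel_approx (closed_openC (@closed_closure _ A)).
exists (~` W); split; last split.
- by move=> x Ax /WU; apply; exact: subset_closure.
- apply: (@meagerS _ _ (closure A `|` (~` closure A `\` W))).
    by move=> x nWx; have [clAx|nclAx] := pselect (closure A x); [left | right].
  by apply: meagerU; apply: nowhere_dense_meager => //; exact: nowhere_dense_closure.
- exact: funBorelC.
Qed.

Lemma meager_funBorel_hull A : meager A ->
  exists B, A `<=` B /\ meager B /\ funBorel R B.
Proof.
move=> [F [ndF AF]].
have /choice[B hB] := fun n => nowhere_dense_funBorel_hull (ndF n).
exists (\bigcup_n B n); split; last split.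
- by move=> x /AF[n _ /(hB n).1 Bx]; exists n.
- by apply: meager_bigcup => n; exact: (hB n).2.1.
- by apply: funBorel_bigcup => n; exact: (hB n).2.2.
Qed.

Lemma open_pmgen_funBorel U : open U -> pmgen (@funBorel R X) (@meager X) U.
Proof.
move=> /open_funBorel_approx[W BaW [WU ndUW]]; rewrite -(setDUK WU).
apply: sigma_algebra_setU; apply: sub_sigma_algebra; first by left.
by right; exact: nowhere_dense_meager.
Qed.

Lemma Borel_sub_pmgen_funBorel : @Borel X `<=` pmgen (@funBorel R X) (@meager X).
Proof.
apply: smallest_sub; first exact: smallest_sigma_algebra.
exact: open_pmgen_funBorel.
Qed.

End cozero.

Section Baire_property.
Variable X : topologicalType.
Implicit Types A B U M G : set X.

Lemma Borel_sub_baire : @Borel X `<=` @baire_property_sets X.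
Proof. by apply: sub_sigma_algebra2; exact: subsetUl. Qed.

Definition almost_open A : Prop := exists U, open U /\ meager (A `+` U).

Lemma baire_property_almost_open A : baire_property_sets A -> almost_open A.
Proof.
move: A; apply: smallest_sub; first split.
- by exists set0; rewrite setY0; split; [exact: open0 | exact: meager0].
- move=> A [U [oU mAU]]; exists (~` closure U); split.
    exact/closed_openC/closed_closure.
  apply: (@meagerS _ _ ((closure U `\` U) `|` (A `+` U))).
    move=> x /=; have := @subset_closure _ U x.
    have [Ax|nAx] := pselect (A x); have [Ux|nUx] := pselect (U x);
      have [clx|nclx] := pselect (closure U x); tauto.
  by apply: meagerU => //; exact/nowhere_dense_meager/nowhere_dense_closureD.
- move=> A /choice[U hU]; exists (\bigcup_n U n); split.
    by apply: bigcup_open => n _; exact: (hU n).1.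
  apply: (meagerS _ (meager_bigcup (fun n => (hU n).2))).
  move=> x [[[n _ Ax] nUx]|[[n _ Ux] nAx]]; exists n => //.
    by left; split=> // Ux; apply: nUx; exists n.
  by right; split=> // Ax; apply: nAx; exists n.
- move=> S [oS|mS]; first by exists S; rewrite setYK; split; [|exact: meager0].
  by exists set0; rewrite setY0; split; [exact: open0 |].
Qed.

Hypothesis X_ccc : countably_cellular X.

(* The closure of the union of a maximal disjoint family of open meager sets. *)
Lemma ex_closed_meager_cover :
  exists M, [/\ closed M, meager M & forall G, open G -> meager G -> G `<=` M].
Proof.
have [F [FQ Fdisj Fmax]] := maximal_pairwise_disjoint (fun G : set X => open G /\ meager G).
have Fopen V : F V -> open V by move=> /FQ[[]].
pose V := \bigcup_(W in F) W.
exists (closure V); split.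
- exact: closed_closure.
- rewrite -(setDUK (@subset_closure _ V)); apply: meagerU.
    by apply: meager_bigcup_countable (X_ccc Fopen Fdisj) _ => W /FQ[[]].
  by apply/nowhere_dense_meager/nowhere_dense_closureD; apply: bigcup_open => W /Fopen.
- move=> G oG mG x Gx; apply: contrapT => nclx.
  have oGV : open (G `\` closure V) by apply: openI oG _; exact/closed_openC/closed_closure.
  have [|W FW [z [[_ nclz] Wz]]] := Fmax _ (conj oGV (meagerS (@subIsetl _ _ _) mG)).
    by exists x.
  by apply: nclz; apply: subset_closure; exists W.
Qed.

Lemma countable_open_disjoint_image (I : Type) (F : set I) (phi : I -> set X) :
  (forall i, F i -> open (phi i) /\ phi i !=set0) ->
  (forall i j, F i -> F j -> i <> j -> phi i `&` phi j = set0) -> countable F.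
Proof.
move=> phiF phi_disj.
have /countable_injP[idx idx_inj] : countable (phi @` F).
  apply: X_ccc => [_ [i Fi <-]|_ _ [i Fi <-] [j Fj <-] ij]; first exact: (phiF i Fi).1.
  by apply: phi_disj => // eij; apply: ij; rewrite eij.
apply/countable_injP; exists (idx \o phi) => i j /[!inE] Fi Fj /= eidx.
apply: contrapT => ij; have [x phix] := (phiF i Fi).2.
have ephi : phi i = phi j by apply: idx_inj; rewrite // inE; [exists i | exists j].
by have := phi_disj i j Fi Fj ij; rewrite -ephi setIid => phi0; rewrite phi0 in phix.
Qed.

Lemma countable_disjoint_nonmeager_Borel (F : set (set X)) :
  (forall A, F A -> Borel A /\ ~ meager A) -> pairwise_disjoint F -> countable F.
Proof.
move=> FBorel Fdisj; have [M [cM mM openM]] := ex_closed_meager_cover.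
have /choice[U hU] : forall A, exists U, F A -> open U /\ meager (A `+` U).
  move=> A; have [FA|nFA] := pselect (F A); last by exists set0 => /nFA.
  by have [U hU] := baire_property_almost_open (Borel_sub_baire (FBorel A FA).1); exists U.
apply: (@countable_open_disjoint_image _ _ (fun A => U A `\` M)).
  move=> A FA; split; first by apply: openI (hU A FA).1 _; exact: closed_openC.
  apply: contrapT => UM0; apply: (FBorel A FA).2.
  apply: (meagerS _ (meagerU (hU A FA).2 mM)) => x Ax.
  have [UAx|] := pselect (U A x); last by left; left.
  by have [|nMx] := pselect (M x); [right | exfalso; apply: UM0; exists x].
move=> A B FA FB AB; apply/seteqP; split=> // x [[UAx nMx] [UBx _]]; apply: nMx.
apply: (openM (U A `&` U B)) => //; first exact: openI (hU A FA).1 (hU B FB).1.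
apply: (meagerS _ (meagerU (hU A FA).2 (hU B FB).2)) => y [UAy UBy].
have [Ay|] := pselect (A y); last by left; right.
have [By|] := pselect (B y); last by right; right.
by have : (A `&` B) y by []; rewrite Fdisj.
Qed.

End Baire_property.

Theorem lemma7p1 (R : realType) (X : topologicalType) :
  tychonoff_space R X -> countably_cellular X ->
  (forall A : set X, meager A ->
     exists B : set X, A `<=` B /\ meager B /\ @funBorel R X B) /\
  (forall F : set (set X),
     (forall A, F A -> Borel A /\ ~ meager A) ->
     (forall A B, F A -> F B -> A <> B -> A `&` B = set0) ->
     countable F) /\
  (pmgen (@Borel X) (@meager X) = pmgen (@funBorel R X) (@meager X) /\
   pmgen (@funBorel R X) (@meager X) = @baire_property_sets X).
Proof.
move=> X_tych X_ccc; split; first exact: meager_funBorel_hull.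
split; first exact: countable_disjoint_nonmeager_Borel.
split; apply/seteqP; split.
- by apply: pmgen_sub; exact: Borel_sub_pmgen_funBorel.
- exact: pmgenS (@funBorel_sub_Borel R X).
- by apply: pmgen_sub => A /funBorel_sub_Borel /Borel_sub_baire.
- by apply: pmgen_sub => U; exact: open_pmgen_funBorel.
Qed.
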